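(* Let $(\gamma_n)$ be a sequence of positive reals satisfying conditions (C1)–(C7) below, with associated orthonormal polynomials $p_n$ and operators $K^n$. For $\omega\in\mathbb{R}$ let $e_\omega(t)=e^{i\omega t}$. Then for every $\omega\in\mathbb{R}$, $e_\omega\in\mathcal{L}$ and $\lim_{n\to\infty}\gamma_n\bigl(|K^n[e_\omega(t)]|^2+|K^{n+1}[e_\omega(t)]|^2\bigr)$ is a positive finite number (so $e_\omega$ represents a nonzero element of $\mathcal{L}_2$). Moreover, for all real $\omega\neq\sigma$ and all $t\in\mathbb{R}$, \[ \lim_{n\to\infty}\frac{\sum_{k=0}^n K^k_t[e^{i\omega t}]\,K^k_t\bigl[\overline{e^{i\sigma t}}\bigr]}{\sum_{j=0}^n \frac{1}{\gamma_j}}=0. \]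
   Context: Given positive reals $\gamma_n$, set $\gamma_{-1}=1$, $p_{-1}=0$, $p_0=1$ and $\gamma_n p_{n+1}(\omega)=\omega p_n(\omega)-\gamma_{n-1}p_{n-1}(\omega)$ ($n\ge0$). Let $\Delta_n=\gamma_{n+1}-\gamma_n$, $\Delta^2_n=\Delta_{n+1}-\Delta_n$. Conditions: (C1) $\gamma_n\to\infty$; (C2) $\Delta_n\to0$; (C3) there exist $n_0,m_0$ with $\gamma_{n+m}>\gamma_n$ for all $n\ge n_0$, $m\ge m_0$; (C4) $\sum 1/\gamma_j=\infty$; (C5) some $\kappa>1$ has $\sum\gamma_j^{-\kappa}<\infty$; (C6) $\sum|\Delta_n|/\gamma_n^2<\infty$; (C7) $\sum|\Delta^2_n|/\gamma_n<\infty$. Let $C^\infty_{\mathbb{R}\to\mathbb{C}}$ be the set of functions $f:\mathbb{R}\to\mathbb{C}$ whose real and imaginary parts are infinitely differentiable. Define the differential operators $K^n_t=(-i)^n p_n\!\left(i\frac{d}{dt}\right)$ (so $K^n_t[e^{i\omega t}]=i^n p_n(\omega)e^{i\omega t}$). $\mathcal{L}$ is the set of $f\in C^\infty_{\mathbb{R}\to\mathbb{C}}$ such that $\beta_n^f(t)=\gamma_n(|K^n[f(t)]|^2+|K^{n+1}[f(t)]|^2)$ converges uniformly on every compact interval; $\mathcal{L}_0$ is the subset of those $f$ for which this limit is $0$, and $\mathcal{L}_2=\mathcal{L}/\mathcal{L}_0$. *)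

From Stdlib Require Import Reals Lra.
From Coquelicot Require Import Coquelicot.
Open Scope R_scope.

(** gamma_{n-1} with the convention gamma_{-1} = 1 *)
Definition gprev (gamma : nat -> R) (n : nat) : R :=
  match n with O => 1 | S m => gamma m end.

(** shift of a coefficient sequence: coefficients of (X * p) *)
Definition cshift (c : nat -> R) (k : nat) : R :=
  match k with O => 0 | S j => c j end.

(** pair (coefficients of p_n, coefficients of p_{n+1}), coefficients indexed by
    the power of omega. Recurrence:
    gamma_n p_{n+1} = omega p_n - gamma_{n-1} p_{n-1},  p_{-1}=0, p_0=1. *)
Fixpoint pcoef_pair (gamma : nat -> R) (n : nat) : (nat -> R) * (nat -> R) :=
  match n with
  | O => ((fun k => if Nat.eqb k 0%nat then 1 else 0),
          (fun k => cshift (fun j => if Nat.eqb j 0%nat then 1 else 0) k / gamma 0%nat))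
  | S m => let (a, b) := pcoef_pair gamma m in
           (b, fun k => (cshift b k - gamma m * a k) / gamma (S m))
  end.
(* In the S m case: a = p_m, b = p_{m+1}, new = p_{m+2}
   = (omega p_{m+1} - gamma_m p_m) / gamma_{m+1}.
   In the O case: p_1 = (omega p_0 - gamma_{-1} p_{-1}) / gamma_0 = omega / gamma_0. *)

Definition pcoef (gamma : nat -> R) (n k : nat) : R := fst (pcoef_pair gamma n) k.

(** p_n(omega) (p_n has degree <= n) *)
Definition peval (gamma : nat -> R) (n : nat) (omega : R) : R :=
  sum_n (fun k => pcoef gamma n k * omega ^ k) n.

Definition smoothC (f : R -> C) : Prop :=
  forall (k : nat) (t : R),
    ex_derive_n (fun s => Re (f s)) k t /\ ex_derive_n (fun s => Im (f s)) k t.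

Definition DnC (f : R -> C) (k : nat) (t : R) : C :=
  (Derive_n (fun s => Re (f s)) k t, Derive_n (fun s => Im (f s)) k t).

(** K^n_t = (-i)^n p_n(i d/dt) *)
Definition Kop (gamma : nat -> R) (n : nat) (f : R -> C) (t : R) : C :=
  Cmult (Cpow (Copp Ci) n)
    (sum_n (fun k => Cmult (RtoC (pcoef gamma n k))
                           (Cmult (Cpow Ci k) (DnC f k t))) n).

Definition beta (gamma : nat -> R) (f : R -> C) (n : nat) (t : R) : R :=
  gamma n * ((Cmod (Kop gamma n f t)) ^ 2 + (Cmod (Kop gamma (S n) f t)) ^ 2).

Definition inL (gamma : nat -> R) (f : R -> C) : Prop :=
  smoothC f /\
  exists L : R -> R, forall a b eps : R, 0 < eps ->
    exists N : nat, forall n : nat, (N <= n)%nat ->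
      forall t : R, a <= t <= b -> Rabs (beta gamma f n t - L t) < eps.

Definition expi (omega : R) (t : R) : C := (cos (omega * t), sin (omega * t)).

Definition Delta (gamma : nat -> R) (n : nat) : R := gamma (S n) - gamma n.
Definition Delta2 (gamma : nat -> R) (n : nat) : R :=
  Delta gamma (S n) - Delta gamma n.

Definition cond_C1 (gamma : nat -> R) : Prop := is_lim_seq gamma p_infty.
Definition cond_C2 (gamma : nat -> R) : Prop := is_lim_seq (Delta gamma) 0.
Definition cond_C3 (gamma : nat -> R) : Prop :=
  exists n0 m0 : nat, forall n m : nat, (n0 <= n)%nat -> (m0 <= m)%nat ->
    gamma (n + m)%nat > gamma n.
Definition cond_C4 (gamma : nat -> R) : Prop :=
  is_lim_seq (sum_n (fun j => / gamma j)) p_infty.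
Definition cond_C5 (gamma : nat -> R) : Prop :=
  exists kappa : R, kappa > 1 /\ ex_series (fun j => Rpower (gamma j) (- kappa)).
Definition cond_C6 (gamma : nat -> R) : Prop :=
  ex_series (fun n => Rabs (Delta gamma n) / (gamma n) ^ 2).
Definition cond_C7 (gamma : nat -> R) : Prop :=
  ex_series (fun n => Rabs (Delta2 gamma n) / gamma n).

From Pilot Require Import Defs.
From Stdlib Require Import Reals Lra Lia FunctionalExtensionality.
From Coquelicot Require Import Coquelicot.
Open Scope R_scope.

(* Evaluated at a real point, the polynomials p_n solve the three-term recurrence, and
   K^n[e_w] = (-i)^n p_n(-w) e_w, so beta_n = gamma_n (p_n(-w)^2 + p_(n+1)(-w)^2) does not
   depend on t.  For any solution x of the recurrence with parameter a, the modified energy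
   H_n = gamma_n (x_n^2 + x_(n+1)^2) - a x_n x_(n+1) + Delta_n (x_(n+1)^2 - x_n^2) / 2
   differs from the energy by a factor 1 + O(1/gamma_n) (C1, C2), and its relative increments
   are O(|Delta_n| / gamma_n^2 + |Delta^2_n| / gamma_n), which is summable (C6, C7).  Hence
   log H_n converges and the energy has a positive limit.  For w <> sigma the
   Christoffel-Darboux identity bounds sum_k p_k(-w) p_k(-sigma) by the two energies, while
   sum_j 1/gamma_j diverges (C4). *)

Lemma is_lim_seq_of_summable_increments (u c : nat -> R) :
  (forall n, Rabs (u (S n) - u n) <= c n) -> ex_series c -> exists l : R, is_lim_seq u l.
Proof.
  intros Hu Hc.
  set (d := fun n => u (S n) - u n).
  assert (Hd : ex_series d).
  { apply ex_series_Rabs, (@ex_series_le R_AbsRing R_CompleteNormedModule _ c); [|exact Hc].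
    intros n; change (Rabs (Rabs (d n)) <= c n); rewrite Rabs_Rabsolu; apply Hu. }
  assert (Htel : forall n, u (S n) = u 0%nat + sum_n d n).
  { induction n as [|n IH]; [rewrite sum_O; unfold d; ring|].
    rewrite sum_Sn; change (plus (sum_n d n) (d (S n))) with (sum_n d n + d (S n)).
    unfold d at 2; lra. }
  exists (u 0%nat + Series d).
  apply is_lim_seq_incr_1, (is_lim_seq_ext (fun n => u 0%nat + sum_n d n)).
  - intros n; symmetry; apply Htel.
  - apply is_lim_seq_plus'; [apply is_lim_seq_const|apply Series_correct, Hd].
Qed.

Lemma ln_relative_increment_le h0 h1 e :
  0 < h0 -> 0 < h1 -> 0 <= e <= 1 / 4 -> Rabs (h1 - h0) <= e * (h0 + h1) ->
  Rabs (ln h1 - ln h0) <= 3 * e.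
Proof.
  intros H0 H1 He Hinc; apply Rabs_le_between in Hinc.
  pose proof (exp_ineq1_le (3 * e)).
  assert (Hup : forall y z, 0 < y -> 0 < z -> z - y <= e * (y + z) -> ln z <= ln y + 3 * e).
  { intros y z Hy Hz Hyz.
    rewrite <- (ln_exp (3 * e)), <- ln_mult by (try apply exp_pos; lra).
    apply ln_le; [lra|].
    (* (1 + e) / (1 - e) <= 1 + 3 e <= exp (3 e) as long as e <= 1/3 *)
    assert (0 <= y * (e * (1 - 3 * e))) by (apply Rmult_le_pos; nra).
    assert (z * (1 - e) <= y * (1 + 3 * e) * (1 - e)) by nra.
    assert (z <= y * (1 + 3 * e)) by nra.
    nra. }
  apply Rabs_le; split.
  - pose proof (Hup h1 h0 H1 H0 ltac:(lra)); lra.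
  - pose proof (Hup h0 h1 H0 H1 ltac:(lra)); lra.
Qed.

Lemma is_lim_seq_of_relative_increments (h e : nat -> R) :
  (forall n, 0 < h n) -> (forall n, Rabs (h (S n) - h n) <= e n * (h n + h (S n))) ->
  (forall n, 0 <= e n <= 1 / 4) -> ex_series e ->
  exists l : R, 0 < l /\ is_lim_seq h l.
Proof.
  intros Hh Hinc He Hes.
  destruct (is_lim_seq_of_summable_increments (fun n => ln (h n)) (fun n => 3 * e n))
    as [lam Hlam].
  - intros n; apply ln_relative_increment_le; auto.
  - apply (@ex_series_scal_l R_AbsRing R_NormedModule), Hes.
  - exists (exp lam); split; [apply exp_pos|].
    apply (is_lim_seq_ext (fun n => exp (ln (h n)))); [intros n; apply exp_ln, Hh|].
    apply is_lim_seq_continuous; [apply derivable_continuous_pt, derivable_pt_exp|exact Hlam].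
Qed.

Lemma is_lim_seq_of_comparable_summable (h b e rho : nat -> R) :
  (forall n, 0 < b n) -> (forall n, Rabs (h n - b n) <= rho n * b n) ->
  (forall n, 0 <= rho n <= 1 / 2) -> is_lim_seq rho 0 ->
  (forall n, Rabs (h (S n) - h n) <= e n * (b n + b (S n))) ->
  (forall n, 0 <= e n <= 1 / 8) -> ex_series e ->
  exists l : R, 0 < l /\ is_lim_seq b l.
Proof.
  intros Hb Hhb Hrho Hrho0 Hinc He Hes.
  assert (Hbh : forall n, b n <= 2 * h n).
  { intros n; specialize (Hhb n); specialize (Hrho n); specialize (Hb n).
    apply Rabs_le_between in Hhb; nra. }
  destruct (is_lim_seq_of_relative_increments h (fun n => 2 * e n)) as [l [Hl Hlim]].
  - intros n; specialize (Hbh n); specialize (Hb n); lra.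
  - intros n; eapply Rle_trans; [apply Hinc|].
    pose proof (Hbh n); pose proof (Hbh (S n)); pose proof (Hb n); pose proof (Hb (S n)).
    specialize (He n); nra.
  - intros n; specialize (He n); lra.
  - apply (@ex_series_scal_l R_AbsRing R_NormedModule), Hes.
  - exists l; split; [exact Hl|].
    assert (Hdiff : is_lim_seq (fun n => h n - b n) 0).
    { apply is_lim_seq_abs_0, (is_lim_seq_le_le (fun _ => 0) _ (fun n => 2 * (rho n * h n))).
      - intros n; split; [apply Rabs_pos|]; eapply Rle_trans; [apply Hhb|].
        pose proof (Hbh n); specialize (Hrho n); nra.
      - apply is_lim_seq_const.
      - replace (Finite 0) with (Rbar_mult 2 (Rbar_mult 0 l)) by (simpl; f_equal; ring).
        apply is_lim_seq_scal_l, is_lim_seq_mult'; assumption. }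
    apply (is_lim_seq_ext (fun n => h n - (h n - b n))); [intros n; ring|].
    replace (Finite l) with (Finite (l - 0)) by (f_equal; ring).
    apply is_lim_seq_minus'; assumption.
Qed.

(* The case n = 0 of the recurrence is the second conjunct, with p_(-1) = 0. *)
Definition is_recurrence_sol (gamma : nat -> R) (a : R) (x : nat -> R) : Prop :=
  x 0%nat = 1 /\ gamma 0%nat * x 1%nat = a /\
  forall n, gamma (S n) * x (S (S n)) = a * x (S n) - gamma n * x n.

Lemma pcoef_S gamma m : pcoef gamma (S m) = snd (pcoef_pair gamma m).
Proof. unfold pcoef; simpl; destruct (pcoef_pair gamma m); reflexivity. Qed.

Lemma pcoef_pair_snd_S gamma m k :
  snd (pcoef_pair gamma (S m)) k =
  (cshift (snd (pcoef_pair gamma m)) k - gamma m * pcoef gamma m k) / gamma (S m).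
Proof. unfold pcoef; simpl; destruct (pcoef_pair gamma m); reflexivity. Qed.

Lemma pcoef_pair_deg gamma n k :
  (n < k)%nat -> pcoef gamma n k = 0 /\ ((S n < k)%nat -> snd (pcoef_pair gamma n) k = 0).
Proof.
  revert k; induction n as [|n IH]; intros k Hk; split.
  - destruct k; [lia|reflexivity].
  - intros Hk'; destruct k as [|[|k]]; [lia|lia|]; simpl; unfold Rdiv; ring.
  - rewrite pcoef_S; apply (IH k); lia.
  - intros Hk'; rewrite pcoef_pair_snd_S; destruct k as [|k]; [lia|]; simpl cshift.
    rewrite (proj2 (IH k ltac:(lia)) ltac:(lia)), (proj1 (IH (S k) ltac:(lia))).
    unfold Rdiv; ring.
Qed.

Lemma sum_f_R0_shift (b : nat -> R) w N :
  sum_f_R0 (fun k => cshift b k * w ^ k) (S N) = w * sum_f_R0 (fun k => b k * w ^ k) N.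
Proof.
  induction N as [|N IH]; [simpl; ring|].
  rewrite tech5, IH; simpl; ring.
Qed.

Lemma peval_recurrence_sol gamma w :
  (forall n, 0 < gamma n) -> is_recurrence_sol gamma w (fun n => peval gamma n w).
Proof.
  intros Hpos; unfold peval; split; [|split].
  - rewrite sum_O; unfold pcoef; simpl; ring.
  - rewrite sum_n_Reals; unfold pcoef; simpl.
    field; apply Rgt_not_eq, Hpos.
  - intros m; rewrite !sum_n_Reals.
    assert (Hdeg : sum_f_R0 (fun k => pcoef gamma m k * w ^ k) (S (S m))
                   = sum_f_R0 (fun k => pcoef gamma m k * w ^ k) m).
    { rewrite !tech5, (proj1 (pcoef_pair_deg gamma m (S m) ltac:(lia))),
        (proj1 (pcoef_pair_deg gamma m (S (S m)) ltac:(lia))); ring. }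
    rewrite scal_sum, (sum_eq _ (fun k => cshift (pcoef gamma (S m)) k * w ^ k
                                         - pcoef gamma m k * w ^ k * gamma m)).
    + rewrite minus_sum, <- scal_sum, sum_f_R0_shift, Hdeg; ring.
    + intros k _; rewrite (pcoef_S gamma (S m)), pcoef_pair_snd_S, <- pcoef_S.
      field; apply Rgt_not_eq, Hpos.
Qed.

Definition energy (gamma x : nat -> R) (n : nat) : R := gamma n * (x n ^ 2 + x (S n) ^ 2).

(* The correction terms cancel the first-order part of the increments of the energy, see
   [modified_energy_increment]. *)
Definition modified_energy (gamma : nat -> R) (a : R) (x : nat -> R) (n : nat) : R :=
  energy gamma x n - a * x n * x (S n) + / 2 * Defs.Delta gamma n * (x (S n) ^ 2 - x n ^ 2).

Section RecurrenceSolutions.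

Variable gamma : nat -> R.
Hypothesis gamma_pos : forall n, 0 < gamma n.

Lemma recurrence_sol_unique a x y :
  is_recurrence_sol gamma a x -> is_recurrence_sol gamma a y -> forall n, x n = y n.
Proof.
  intros [X0 [X1 X2]] [Y0 [Y1 Y2]].
  assert (Hpair : forall n, x n = y n /\ x (S n) = y (S n)).
  { induction n as [|n [IHn IHSn]].
    - split; [lra|]. apply (Rmult_eq_reg_l (gamma 0%nat)); [lra|apply Rgt_not_eq, gamma_pos].
    - split; [exact IHSn|]. apply (Rmult_eq_reg_l (gamma (S n))).
      + rewrite X2, Y2, IHn, IHSn; reflexivity.
      + apply Rgt_not_eq, gamma_pos. }
  intros n; apply Hpair.
Qed.

Lemma recurrence_sol_alt a x :
  is_recurrence_sol gamma a x -> is_recurrence_sol gamma (- a) (fun k => (-1) ^ k * x k).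
Proof.
  intros [X0 [X1 X2]]; split; [|split]; simpl.
  - rewrite X0; ring.
  - rewrite <- X1; ring.
  - intros n; transitivity ((-1) ^ n * (gamma (S n) * x (S (S n)))); [ring|].
    rewrite X2; ring.
Qed.

Lemma peval_opp n w : peval gamma n (- w) = (-1) ^ n * peval gamma n w.
Proof.
  apply (recurrence_sol_unique (- w) (fun k => peval gamma k (- w))
                                     (fun k => (-1) ^ k * peval gamma k w)).
  - apply peval_recurrence_sol, gamma_pos.
  - apply recurrence_sol_alt, peval_recurrence_sol, gamma_pos.
Qed.

Lemma energy_pos a x : is_recurrence_sol gamma a x -> forall n, 0 < energy gamma x n.
Proof.
  intros [X0 [_ X2]].
  assert (Hnz : forall n, x n <> 0 \/ x (S n) <> 0).
  { induction n as [|n IH]; [left; lra|].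
    destruct (Req_dec (x (S n)) 0) as [E|E]; [|left; exact E].
    right; intros E2; specialize (X2 n); rewrite E, E2 in X2.
    destruct IH as [IH|IH]; [|contradiction].
    pose proof (gamma_pos n); apply IH; nra. }
  intros n; unfold energy; apply Rmult_lt_0_compat; [apply gamma_pos|].
  destruct (Hnz n) as [E|E]; pose proof (pow2_ge_0 (x n)); pose proof (pow2_ge_0 (x (S n)));
    pose proof (pow2_gt_0 _ E); lra.
Qed.

Lemma christoffel_darboux a c x z :
  is_recurrence_sol gamma a x -> is_recurrence_sol gamma c z -> forall n,
  (a - c) * sum_n (fun k => x k * z k) n = gamma n * (x (S n) * z n - x n * z (S n)).
Proof.
  intros [X0 [X1 X2]] [Z0 [Z1 Z2]]; induction n as [|n IH].
  - rewrite sum_O, X0, Z0, <- X1, <- Z1; ring.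
  - rewrite sum_Sn, Rmult_plus_distr_l, IH.
    transitivity ((gamma (S n) * x (S (S n))) * z (S n)
                  - x (S n) * (gamma (S n) * z (S (S n)))); [|ring].
    rewrite X2, Z2; simpl; ring.
Qed.

Lemma christoffel_darboux_bound a c x z n :
  is_recurrence_sol gamma a x -> is_recurrence_sol gamma c z ->
  Rabs ((a - c) * sum_n (fun k => x k * z k) n) <= (energy gamma x n + energy gamma z n) / 2.
Proof.
  intros Hx Hz; rewrite (christoffel_darboux a c x z Hx Hz); unfold energy.
  pose proof (gamma_pos n).
  set (x0 := x n) in *; set (x1 := x (S n)); set (z0 := z n); set (z1 := z (S n)).
  pose proof (pow2_ge_0 (x1 - z0)); pose proof (pow2_ge_0 (x1 + z0));
    pose proof (pow2_ge_0 (x0 - z1)); pose proof (pow2_ge_0 (x0 + z1)).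
  apply Rabs_le; split; nra.
Qed.

Lemma modified_energy_increment a x n :
  is_recurrence_sol gamma a x ->
  modified_energy gamma a x (S n) - modified_energy gamma a x n =
  Defs.Delta gamma n * (a * x (S n) + Defs.Delta gamma n * x n) ^ 2 / (2 * gamma (S n) ^ 2)
  + / 2 * Delta2 gamma n * (x (S (S n)) ^ 2 - x (S n) ^ 2).
Proof.
  intros [_ [_ X2]].
  assert (Hg : gamma (S n) <> 0) by apply Rgt_not_eq, gamma_pos.
  assert (Hx : x (S (S n)) = (a * x (S n) - gamma n * x n) / gamma (S n))
    by (rewrite <- X2; field; exact Hg).
  unfold modified_energy, energy, Delta2, Defs.Delta; rewrite Hx; field; exact Hg.
Qed.

Lemma modified_energy_close a x n :
  Rabs (modified_energy gamma a x n - energy gamma x n)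
  <= (Rabs a + Rabs (Defs.Delta gamma n)) / (2 * gamma n) * energy gamma x n.
Proof.
  pose proof (gamma_pos n).
  replace ((Rabs a + Rabs (Defs.Delta gamma n)) / (2 * gamma n) * energy gamma x n)
    with (Rabs a * ((x n ^ 2 + x (S n) ^ 2) / 2)
          + / 2 * Rabs (Defs.Delta gamma n) * (x n ^ 2 + x (S n) ^ 2))
    by (unfold energy; field; lra).
  unfold modified_energy.
  match goal with |- Rabs ?e <= _ => replace e with (- (a * (x n * x (S n)))
    + / 2 * Defs.Delta gamma n * (x (S n) ^ 2 - x n ^ 2)) by ring end.
  eapply Rle_trans; [apply Rabs_triang|].
  rewrite Rabs_Ropp, (Rabs_mult a), (Rabs_mult (/ 2 * _)), (Rabs_mult (/ 2)),
    (Rabs_pos_eq (/ 2)) by lra.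
  pose proof (pow2_ge_0 (x n)); pose proof (pow2_ge_0 (x (S n))).
  pose proof (Rabs_pos a); pose proof (Rabs_pos (Defs.Delta gamma n)).
  pose proof (pow2_ge_0 (x n + x (S n))); pose proof (pow2_ge_0 (x n - x (S n))).
  apply Rplus_le_compat; apply Rmult_le_compat_l; try lra; apply Rabs_le; split; nra.
Qed.

Lemma modified_energy_increment_bound a x n :
  is_recurrence_sol gamma a x -> 2 <= gamma n -> Rabs (Defs.Delta gamma n) <= 1 ->
  Rabs (modified_energy gamma a x (S n) - modified_energy gamma a x n)
  <= ((a ^ 2 + 1) * Rabs (Defs.Delta gamma n) / gamma n ^ 2 + Rabs (Delta2 gamma n) / gamma n)
     * (energy gamma x n + energy gamma x (S n)).
Proof.
  intros Hx Hg0 HD; rewrite (modified_energy_increment a x n Hx); unfold energy.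
  assert (Hg1 : gamma n <= 2 * gamma (S n))
    by (apply Rabs_le_between in HD; unfold Defs.Delta in HD; lra).
  set (g0 := gamma n) in *; set (g1 := gamma (S n)) in *; set (D := Defs.Delta gamma n) in *.
  set (D2 := Delta2 gamma n); set (x0 := x n); set (x1 := x (S n)); set (x2 := x (S (S n))).
  pose proof (Rabs_pos D); pose proof (Rabs_pos D2).
  pose proof (pow2_ge_0 x0); pose proof (pow2_ge_0 x1); pose proof (pow2_ge_0 x2).
  set (P := (a ^ 2 + 1) * (x0 ^ 2 + x1 ^ 2)).
  assert (Hcauchy_schwarz : (a * x1 + D * x0) ^ 2 <= P).
  { assert (D ^ 2 <= 1) by (rewrite <- (pow2_abs D); nra).
    pose proof (pow2_ge_0 (a * x0 - D * x1)); unfold P; nra. }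
  assert (Hterm1 : Rabs (D * (a * x1 + D * x0) ^ 2 / (2 * g1 ^ 2)) <= Rabs D * P / g0).
  { unfold Rdiv; rewrite !Rabs_mult, (Rabs_pos_eq (_ ^ 2)) by apply pow2_ge_0.
    rewrite (Rabs_pos_eq (/ _)) by (left; apply Rinv_0_lt_compat; nra).
    apply Rmult_le_compat; try apply Rmult_le_pos; try apply pow2_ge_0; try lra.
    - left; apply Rinv_0_lt_compat; nra.
    - apply Rmult_le_compat_l; lra.
    - apply Rinv_le_contravar; nra. }
  assert (Hterm2 : Rabs (/ 2 * D2 * (x2 ^ 2 - x1 ^ 2)) <= Rabs D2 * (g1 / g0) * (x1 ^ 2 + x2 ^ 2)).
  { rewrite !Rabs_mult, (Rabs_pos_eq (/ 2)) by lra.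
    assert (Rabs (x2 ^ 2 - x1 ^ 2) <= x1 ^ 2 + x2 ^ 2) by (apply Rabs_le; lra).
    assert (/ 2 <= g1 / g0) by (apply (Rmult_le_reg_r g0); [lra|]; field_simplify; lra).
    rewrite (Rmult_comm (/ 2)), Rmult_assoc, (Rmult_assoc (Rabs D2)).
    pose proof (Rabs_pos (x2 ^ 2 - x1 ^ 2)).
    apply Rmult_le_compat_l; [lra|]; apply Rmult_le_compat; lra. }
  eapply Rle_trans; [apply Rabs_triang|].
  eapply Rle_trans; [apply Rplus_le_compat; [exact Hterm1|exact Hterm2]|].
  assert (HE0 : Rabs D * P / g0 <= (a ^ 2 + 1) * Rabs D / g0 ^ 2 * (g0 * (x0 ^ 2 + x1 ^ 2)))
    by (right; unfold P; field; lra).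
  assert (HE1 : Rabs D2 * (g1 / g0) * (x1 ^ 2 + x2 ^ 2) = Rabs D2 / g0 * (g1 * (x1 ^ 2 + x2 ^ 2)))
    by (field; lra).
  assert (0 <= (a ^ 2 + 1) * Rabs D / g0 ^ 2)
    by (apply Rmult_le_pos; [nra|left; apply Rinv_0_lt_compat; nra]).
  assert (0 <= Rabs D2 / g0) by (apply Rmult_le_pos; [lra|left; apply Rinv_0_lt_compat; lra]).
  assert (0 <= g1 * (x1 ^ 2 + x2 ^ 2)) by nra.
  assert (0 <= g0 * (x0 ^ 2 + x1 ^ 2)) by nra.
  nra.
Qed.

End RecurrenceSolutions.

Definition increment_rate (gamma : nat -> R) (a : R) (n : nat) : R :=
  (a ^ 2 + 1) * Rabs (Defs.Delta gamma n) / gamma n ^ 2 + Rabs (Delta2 gamma n) / gamma n.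

Definition comparison_rate (gamma : nat -> R) (a : R) (n : nat) : R :=
  (Rabs a + Rabs (Defs.Delta gamma n)) / (2 * gamma n).

Lemma ex_series_increment_rate gamma a :
  cond_C6 gamma -> cond_C7 gamma -> ex_series (increment_rate gamma a).
Proof.
  intros H6 H7.
  apply (ex_series_ext (fun n => plus (scal (a ^ 2 + 1) (Rabs (Defs.Delta gamma n) / gamma n ^ 2))
                                      (Rabs (Delta2 gamma n) / gamma n))).
  - intros n; unfold increment_rate, plus, scal; simpl.
    change mult with Rmult; unfold Rdiv; ring.
  - apply (@ex_series_plus R_AbsRing R_NormedModule); [|exact H7].
    apply (@ex_series_scal_l R_AbsRing R_NormedModule), H6.
Qed.

Lemma is_lim_seq_comparison_rate gamma a :
  cond_C1 gamma -> cond_C2 gamma -> is_lim_seq (comparison_rate gamma a) 0.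
Proof.
  intros H1 H2.
  apply (is_lim_seq_ext (fun n => (Rabs a + Rabs (Defs.Delta gamma n)) * / 2 * / gamma n)).
  - intros n; unfold comparison_rate, Rdiv; rewrite Rinv_mult; ring.
  - replace (Finite 0) with (Rbar_mult ((Rabs a + Rabs 0) * / 2) 0)
      by (simpl; f_equal; ring).
    apply is_lim_seq_mult'; [|exact (is_lim_seq_inv gamma p_infty H1 ltac:(discriminate))].
    apply is_lim_seq_mult'; [|apply is_lim_seq_const].
    apply is_lim_seq_plus'; [apply is_lim_seq_const|exact (is_lim_seq_abs _ 0 H2)].
Qed.

Lemma eventually_lt_of_is_lim_seq_0 (u : nat -> R) (c : R) :
  is_lim_seq u 0 -> 0 < c -> eventually (fun n => Rabs (u n) < c).
Proof.
  intros Hu Hc; apply is_lim_seq_spec in Hu.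
  eapply filter_imp; [|exact (Hu (mkposreal c Hc))]; intros n; simpl; rewrite Rminus_0_r; auto.
Qed.

Lemma energy_cvg gamma a x :
  (forall n, 0 < gamma n) -> cond_C1 gamma -> cond_C2 gamma -> cond_C6 gamma -> cond_C7 gamma ->
  is_recurrence_sol gamma a x -> exists l : R, 0 < l /\ is_lim_seq (energy gamma x) l.
Proof.
  intros Hpos H1 H2 H6 H7 Hx.
  pose proof (ex_series_increment_rate gamma a H6 H7) as Heta.
  pose proof (is_lim_seq_comparison_rate gamma a H1 H2) as Hrho.
  assert (Hev : eventually (fun n => 2 < gamma n /\ Rabs (Defs.Delta gamma n) < 1 /\
                  Rabs (increment_rate gamma a n) < 1 / 8 /\
                  Rabs (comparison_rate gamma a n) < 1 / 2)).
  { repeat apply filter_and.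
    - apply is_lim_seq_spec in H1; apply H1.
    - apply eventually_lt_of_is_lim_seq_0; [exact H2|lra].
    - apply eventually_lt_of_is_lim_seq_0; [apply ex_series_lim_0, Heta|lra].
    - apply eventually_lt_of_is_lim_seq_0; [exact Hrho|lra]. }
  destruct Hev as [N HN].
  assert (Hrates : forall n, 0 <= increment_rate gamma a n /\ 0 <= comparison_rate gamma a n).
  { intros n; pose proof (Hpos n); pose proof (Rabs_pos (Defs.Delta gamma n));
      pose proof (Rabs_pos (Delta2 gamma n)); pose proof (Rabs_pos a).
    unfold increment_rate, comparison_rate, Rdiv; split.
    - apply Rplus_le_le_0_compat; apply Rmult_le_pos; try nra;
        left; apply Rinv_0_lt_compat; nra.
    - apply Rmult_le_pos; [lra|left; apply Rinv_0_lt_compat; lra]. }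
  destruct (is_lim_seq_of_comparable_summable
              (fun n => modified_energy gamma a x (n + N)) (fun n => energy gamma x (n + N))
              (fun n => increment_rate gamma a (n + N))
              (fun n => comparison_rate gamma a (n + N))) as [l [Hl Hlim]].
  - intros n; apply (energy_pos gamma Hpos a), Hx.
  - intros n; apply modified_energy_close, Hpos.
  - intros n; destruct (HN (n + N)%nat ltac:(lia)) as [_ [_ [_ Hr]]].
    pose proof (proj2 (Hrates (n + N)%nat)); apply Rabs_lt_between in Hr; lra.
  - exact (proj1 (is_lim_seq_incr_n _ N _) Hrho).
  - intros n; destruct (HN (n + N)%nat ltac:(lia)) as [Hg [HD _]].
    apply (modified_energy_increment_bound gamma Hpos); [exact Hx|lra|lra].
  - intros n; destruct (HN (n + N)%nat ltac:(lia)) as [_ [_ [He _]]].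
    pose proof (proj1 (Hrates (n + N)%nat)); apply Rabs_lt_between in He; lra.
  - apply (ex_series_ext (fun k => increment_rate gamma a (N + k)));
      [intros k; rewrite Nat.add_comm; reflexivity|].
    apply ex_series_incr_n, Heta.
  - exists l; split; [exact Hl|]; exact (proj2 (is_lim_seq_incr_n _ N _) Hlim).
Qed.

Lemma DnC_expi w k t :
  DnC (expi w) k t = Cmult (Cpow (Cmult Ci (RtoC w)) k) (expi w t).
Proof.
  revert t; induction k as [|k IH]; intros t.
  - unfold DnC, expi; simpl; apply injective_projections; simpl; ring.
  - assert (IHre : forall s, Derive_n (fun s => Re (expi w s)) k s
                    = Re (Cmult (Cpow (Cmult Ci (RtoC w)) k) (expi w s)))
      by (intros s; rewrite <- IH; reflexivity).
    assert (IHim : forall s, Derive_n (fun s => Im (expi w s)) k s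
                    = Im (Cmult (Cpow (Cmult Ci (RtoC w)) k) (expi w s)))
      by (intros s; rewrite <- IH; reflexivity).
    unfold DnC; simpl Derive_n; rewrite (Derive_ext _ _ _ IHre), (Derive_ext _ _ _ IHim).
    rewrite Cpow_S; destruct (Cpow (Cmult Ci (RtoC w)) k) as [p q]; simpl.
    apply injective_projections; simpl; apply is_derive_unique; auto_derive; auto; ring.
Qed.

Lemma smoothC_expi w : smoothC (expi w).
Proof.
  intros [|k] t; split; simpl; auto.
  - apply (ex_derive_ext (fun s => Re (Cmult (Cpow (Cmult Ci (RtoC w)) k) (expi w s)))).
    + intros s; rewrite <- DnC_expi; reflexivity.
    + destruct (Cpow (Cmult Ci (RtoC w)) k) as [p q]; simpl; auto_derive; auto.
  - apply (ex_derive_ext (fun s => Im (Cmult (Cpow (Cmult Ci (RtoC w)) k) (expi w s)))).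
    + intros s; rewrite <- DnC_expi; reflexivity.
    + destruct (Cpow (Cmult Ci (RtoC w)) k) as [p q]; simpl; auto_derive; auto.
Qed.

Lemma sum_n_RtoC_mult (u : nat -> R) (z : C) n :
  sum_n (fun k => Cmult (RtoC (u k)) z) n = Cmult (RtoC (sum_n u n)) z.
Proof.
  induction n as [|n IH]; [rewrite !sum_O; reflexivity|].
  rewrite !sum_Sn, IH; change (plus (sum_n u n) (u (S n))) with (sum_n u n + u (S n)).
  rewrite RtoC_plus; change (plus ?a ?b) with (Cplus a b).
  match goal with |- ?u = ?v => change (@eq C u v) end; ring.
Qed.

Lemma Kop_expi gamma n w t :
  Kop gamma n (expi w) t = Cmult (Cpow (Copp Ci) n) (Cmult (RtoC (peval gamma n (- w))) (expi w t)).
Proof.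
  unfold Kop, peval; f_equal; rewrite <- sum_n_RtoC_mult; apply sum_n_ext; intros k.
  rewrite DnC_expi, RtoC_mult, RtoC_pow.
  replace (RtoC (- w)) with (Cmult Ci (Cmult Ci (RtoC w)))
    by (apply injective_projections; simpl; ring).
  rewrite (Cpow_mult_l Ci (Cmult Ci (RtoC w))).
  match goal with |- ?u = ?v => change (@eq C u v) end; ring.
Qed.

Lemma Cmod_Kop_expi gamma n w t : Cmod (Kop gamma n (expi w) t) = Rabs (peval gamma n (- w)).
Proof.
  assert (Hi : Cmod (Copp Ci) = 1).
  { unfold Cmod, Copp, Ci; simpl.
    match goal with |- sqrt ?a = 1 => replace a with 1 by ring end; apply sqrt_1. }
  assert (He : Cmod (expi w t) = 1).
  { unfold Cmod, expi; simpl.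
    match goal with |- sqrt ?a = 1 => replace a with (Rsqr (sin (w * t)) + Rsqr (cos (w * t)))
      by (unfold Rsqr; ring) end.
    rewrite sin2_cos2; apply sqrt_1. }
  rewrite Kop_expi, !Cmod_mult, Cmod_pow, Hi, He, Cmod_R, pow1; ring.
Qed.

Lemma beta_expi gamma w n t :
  beta gamma (expi w) n t = energy gamma (fun k => peval gamma k (- w)) n.
Proof. unfold beta; rewrite !Cmod_Kop_expi, !pow2_abs; reflexivity. Qed.

Lemma Kop_expi_mult gamma k w v t :
  Cmult (Kop gamma k (expi w) t) (Kop gamma k (expi v) t)
  = Cmult (RtoC ((-1) ^ k * peval gamma k (- w) * peval gamma k (- v)))
          (Cmult (expi w t) (expi v t)).
Proof.
  assert (Hsq : Cmult (Cpow (Copp Ci) k) (Cpow (Copp Ci) k) = RtoC ((-1) ^ k)).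
  { rewrite <- Cpow_mult_l, RtoC_pow; f_equal; apply injective_projections; simpl; ring. }
  rewrite !Kop_expi, !RtoC_mult, <- Hsq.
  match goal with |- ?u = ?v => change (@eq C u v) end; ring.
Qed.

Lemma Cconj_expi s : (fun t => Cconj (expi s t)) = expi (- s).
Proof.
  apply functional_extensionality; intros t; unfold Cconj, expi; simpl.
  replace (- s * t) with (- (s * t)) by ring; rewrite cos_neg, sin_neg; reflexivity.
Qed.

Lemma inL_expi gamma w (l : R) :
  is_lim_seq (energy gamma (fun k => peval gamma k (- w))) l -> inL gamma (expi w).
Proof.
  intros Hl; split; [apply smoothC_expi|].
  exists (fun _ => l); intros a b eps Heps.
  apply is_lim_seq_spec in Hl; destruct (Hl (mkposreal eps Heps)) as [N HN].
  exists N; intros n Hn t _; rewrite beta_expi; exact (HN n Hn).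
Qed.

Lemma cross_sum_div_cvg0 gamma a c x z (lx lz : R) (D : nat -> R) :
  (forall n, 0 < gamma n) -> a <> c ->
  is_recurrence_sol gamma a x -> is_recurrence_sol gamma c z ->
  is_lim_seq (energy gamma x) lx -> is_lim_seq (energy gamma z) lz ->
  (forall n, 0 < D n) -> is_lim_seq D p_infty ->
  is_lim_seq (fun n => sum_n (fun k => x k * z k) n / D n) 0.
Proof.
  intros Hpos Hac Hx Hz Hlx Hlz HD HDinf.
  assert (Hac' : 0 < Rabs (a - c)) by (apply Rabs_pos_lt; lra).
  apply is_lim_seq_abs_0, (is_lim_seq_le_le (fun _ => 0) _
    (fun n => (energy gamma x n + energy gamma z n) / (2 * Rabs (a - c)) * / D n)).
  - intros n; split; [apply Rabs_pos|].
    pose proof (christoffel_darboux_bound gamma Hpos a c x z n Hx Hz) as Hcd.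
    pose proof (HD n); pose proof (Rinv_0_lt_compat _ (HD n)).
    unfold Rdiv; rewrite Rabs_mult, (Rabs_pos_eq (/ D n)) by lra.
    apply Rmult_le_compat_r; [lra|].
    rewrite Rabs_mult in Hcd; apply (Rmult_le_reg_l (Rabs (a - c))); [exact Hac'|].
    replace (Rabs (a - c) * ((energy gamma x n + energy gamma z n) * / (2 * Rabs (a - c))))
      with ((energy gamma x n + energy gamma z n) / 2) by (field; lra).
    exact Hcd.
  - apply is_lim_seq_const.
  - replace (Finite 0) with (Rbar_mult ((lx + lz) / (2 * Rabs (a - c))) 0)
      by (simpl; f_equal; ring).
    apply is_lim_seq_mult'; [|exact (is_lim_seq_inv D p_infty HDinf ltac:(discriminate))].
    apply is_lim_seq_div'; [apply is_lim_seq_plus'; assumption|apply is_lim_seq_const|lra].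
Qed.

Lemma filterlim_RtoC_mult_0 (u : nat -> R) (z : C) :
  is_lim_seq u 0 -> filterlim (fun n => Cmult (RtoC (u n)) z) eventually (locally (RtoC 0)).
Proof.
  intros Hu; apply filterlim_locally; intros eps.
  assert (Hz : 0 < eps / (Cmod z + 1)) by (pose proof (Cmod_ge_0 z); apply Rdiv_lt_0_compat;
    [apply cond_pos|lra]).
  apply is_lim_seq_spec in Hu; eapply filter_imp; [|exact (Hu (mkposreal _ Hz))].
  intros n; simpl; rewrite Rminus_0_r; intros Hn.
  apply (@norm_compat1 C_AbsRing C_NormedModule).
  change (norm (minus (Cmult (RtoC (u n)) z) (RtoC 0))) with
    (Cmod (Cminus (Cmult (RtoC (u n)) z) (RtoC 0))).
  replace (Cminus (Cmult (RtoC (u n)) z) (RtoC 0)) with (Cmult (RtoC (u n)) z)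
    by (apply injective_projections; simpl; ring).
  rewrite Cmod_mult, Cmod_R; pose proof (Cmod_ge_0 z); pose proof (Rabs_pos (u n)).
  apply (Rmult_lt_compat_r (Cmod z + 1)) in Hn; [|lra].
  unfold Rdiv in Hn; rewrite Rmult_assoc, Rinv_l, Rmult_1_r in Hn by lra.
  pose proof (cond_pos eps); nra.
Qed.

Lemma sum_Kop_expi_conj gamma w s t n :
  (forall n, 0 < gamma n) ->
  sum_n (fun k => Cmult (Kop gamma k (expi w) t) (Kop gamma k (expi (- s)) t)) n
  = Cmult (RtoC (sum_n (fun k => peval gamma k (- w) * peval gamma k (- s)) n))
          (Cmult (expi w t) (expi (- s) t)).
Proof.
  intros Hpos; rewrite <- sum_n_RtoC_mult; apply sum_n_ext; intros k.
  rewrite Kop_expi_mult, Ropp_involutive, (peval_opp gamma Hpos k s); do 2 f_equal; ring.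
Qed.

Lemma sum_n_inv_pos (gamma : nat -> R) n :
  (forall n, 0 < gamma n) -> 0 < sum_n (fun j => / gamma j) n.
Proof.
  intros Hpos; induction n as [|n IH].
  - rewrite sum_O; apply Rinv_0_lt_compat, Hpos.
  - rewrite sum_Sn; pose proof (Rinv_0_lt_compat _ (Hpos (S n))).
    change (0 < sum_n (fun j => / gamma j) n + / gamma (S n)); lra.
Qed.

Theorem theorem32 (gamma : nat -> R)
  (Hpos : forall n : nat, 0 < gamma n)
  (H1 : cond_C1 gamma) (H2 : cond_C2 gamma) (H3 : cond_C3 gamma) (H4 : cond_C4 gamma)
  (H5 : cond_C5 gamma) (H6 : cond_C6 gamma) (H7 : cond_C7 gamma) :
  (forall omega : R,
     inL gamma (expi omega) /\
     forall t : R, exists l : R, 0 < l /\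
       is_lim_seq (fun n => beta gamma (expi omega) n t) l) /\
  (forall omega sigma : R, omega <> sigma -> forall t : R,
     filterlim
       (fun n : nat =>
          Cmult (sum_n (fun k => Cmult (Kop gamma k (expi omega) t)
                                       (Kop gamma k (fun s => Cconj (expi sigma s)) t)) n)
                (RtoC (/ sum_n (fun j => / gamma j) n)))
       eventually (locally (RtoC 0))).
Proof.
  assert (Hsol : forall w, is_recurrence_sol gamma (- w) (fun k => peval gamma k (- w)))
    by (intros w; apply peval_recurrence_sol, Hpos).
  assert (Hcvg : forall w, exists l, 0 < l /\
                   is_lim_seq (energy gamma (fun k => peval gamma k (- w))) l)
    by (intros w; exact (energy_cvg gamma _ _ Hpos H1 H2 H6 H7 (Hsol w))).
  split.
  - intros w; destruct (Hcvg w) as [l [Hl Hlim]].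
    split; [exact (inL_expi gamma w l Hlim)|].
    intros t; exists l; split; [exact Hl|].
    exact (is_lim_seq_ext _ _ _ (fun n => eq_sym (beta_expi gamma w n t)) Hlim).
  - intros w s Hws t; rewrite Cconj_expi.
    destruct (Hcvg w) as [lw [_ Hlw]]; destruct (Hcvg s) as [ls [_ Hls]].
    apply (filterlim_ext (fun n => Cmult
      (RtoC (sum_n (fun k => peval gamma k (- w) * peval gamma k (- s)) n
             / sum_n (fun j => / gamma j) n)) (Cmult (expi w t) (expi (- s) t)))).
    { intros n; rewrite sum_Kop_expi_conj by exact Hpos; unfold Rdiv; rewrite RtoC_mult.
      match goal with |- ?u = ?v => change (@eq C u v) end; ring. }
    apply filterlim_RtoC_mult_0.
    apply (cross_sum_div_cvg0 gamma (- w) (- s) _ _ lw ls _ Hpos); try easy; [lra|].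
    intros n; apply sum_n_inv_pos, Hpos.
Qed.
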